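(* Let $\delta=(\delta_0,\dots,\delta_h)$ with $h\ge2$ be a characteristic $\delta$-sequence and let $k$ be an integer with $2\le k\le h$. Then (i) $\delta_k+M_k\in\Gamma(\delta_1,\dots,\delta_{k-1})$; (ii) $\delta_k+M_k-\delta_0\notin\Gamma(\delta_0,\dots,\delta_{k-1})$.
   Context: For a set $A$ of integers, $\Gamma(A)$ is the additive semigroup (containing $0$) generated by $A$. A characteristic $\delta$-sequence (in the sense of Abhyankar–Moh) is a sequence of positive integers $\delta_0,\dots,\delta_h$ such that, with $d_i=\gcd(\delta_0,\dots,\delta_{i-1})$ for $1\le i\le h+1$: $d_{h+1}=1$ and $d_i>d_{i+1}$ for $1\le i\le h$; $\delta_i\frac{d_i}{d_{i+1}}\in\Gamma(\delta_0,\dots,\delta_{i-1})$ for $1\le i\le h$; and $\delta_0>\delta_1$, $\delta_i\frac{d_i}{d_{i+1}}>\delta_{i+1}$ for $1\le i\le h-1$. The $q$- and $M$-sequences are defined by $M_1=-\delta_1$ and, for $i=2,\dots,h$, $q_i=\delta_{i-1}\frac{d_{i-1}}{d_i}-\delta_i$, $M_i=M_{i-1}+q_i$. *)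

(* Sequences delta : nat -> nat, only indices 0..h matter. *)
From mathcomp Require Import all_boot all_order all_algebra.
Set Implicit Arguments. Unset Strict Implicit. Unset Printing Implicit Defensive.
Import GRing.Theory Num.Theory.

(* membership of an integer z in Gamma(delta_lo, ..., delta_{hi-1}):
   z is a nonnegative integer combination of these terms (0 included). *)
Definition inGamma (delta : nat -> nat) (lo hi : nat) (z : int) : Prop :=
  exists c : nat -> nat, z = Posz (\sum_(lo <= i < hi) c i * delta i)%N.

Definition dseq (delta : nat -> nat) (i : nat) : nat :=
  \big[gcdn/0%N]_(j < i) delta j.

Definition char_delta_seq (delta : nat -> nat) (h : nat) : Prop :=
  (forall i, (i <= h)%N -> (0 < delta i)%N) /\
      dseq delta h.+1 = 1%N /\
      (forall i, (1 <= i <= h)%N -> (dseq delta i.+1 < dseq delta i)%N) /\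
      (forall i, (1 <= i <= h)%N ->
         inGamma delta 0 i (Posz (delta i * (dseq delta i %/ dseq delta i.+1)))) /\
      (delta 1 < delta 0)%N /\
      (forall i, (1 <= i <= h.-1)%N ->
         (delta i.+1 < delta i * (dseq delta i %/ dseq delta i.+1))%N).

Definition qseq (delta : nat -> nat) (i : nat) : int :=
  (Posz (delta i.-1 * (dseq delta i.-1 %/ dseq delta i)) - Posz (delta i))%R.

(* M_1 = -delta_1, M_i = M_{i-1} + q_i, i.e. M_k = -delta_1 + sum_{i=2}^k q_i *)
Definition Mseq (delta : nat -> nat) (k : nat) : int :=
  (- Posz (delta 1%N) + \sum_(2 <= i < k.+1) qseq delta i)%R.

From mathcomp Require Import all_boot all_order all_algebra.
From mathcomp Require Import zify ring.
Set Implicit Arguments. Unset Strict Implicit. Unset Printing Implicit Defensive.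
Import GRing.Theory Num.Theory.

(* Write n_j = d_j / d_(j+1).  Telescoping the q-sequence gives
   delta_k + M_k = sum_(1 <= j < k) (n_j - 1) delta_j, which is (i).  For (ii),
   every element of Gamma(delta_0, ..., delta_(m-1)) has a standard form
   a_0 delta_0 + sum_(1 <= j < m) a_j delta_j with 0 <= a_j < n_j and a_0 >= 0:
   the top coefficient can be reduced mod n_(m-1) because n_(m-1) delta_(m-1)
   lies in Gamma(delta_0, ..., delta_(m-2)), and it is then unique because
   d_(m-1) divides (r - a) delta_(m-1) only if n_(m-1) divides r - a.  So
   delta_k + M_k - delta_0, whose standard form has a_0 = -1, is not in Gamma. *)

Lemma dvdn_div_gcdl d e x : (0 < gcdn d e)%N -> (d %| x * e)%N -> (d %/ gcdn d e %| x)%N.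
Proof.
move=> g_gt0 dvd_d_xe; rewrite dvdn_divLR ?dvdn_gcdl // muln_gcdr.
by rewrite dvdn_gcd dvdn_mull // dvd_d_xe.
Qed.

Lemma natz_comb lo hi (c e : nat -> nat) :
  Posz (\sum_(lo <= j < hi) c j * e j)%N = (\sum_(lo <= j < hi) Posz (c j) * Posz (e j))%R.
Proof. by rewrite (big_morph Posz PoszD erefl); apply: eq_bigr => j _. Qed.

Definition nseq (delta : nat -> nat) (j : nat) : nat := dseq delta j %/ dseq delta j.+1.

Lemma dseqS delta i : dseq delta i.+1 = gcdn (dseq delta i) (delta i).
Proof. by rewrite /dseq big_ord_recr. Qed.

Lemma dseq_dvd delta m j : (j < m)%N -> (dseq delta m %| delta j)%N.
Proof.
elim: m => // m IH; rewrite ltnS leq_eqVlt => /orP[/eqP->|/IH dvd_j].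
  by rewrite dseqS dvdn_gcdr.
by rewrite dseqS (dvdn_trans (dvdn_gcdl _ _) dvd_j).
Qed.

Lemma dseq_dvdz_sum delta (a : nat -> int) lo m :
  (Posz (dseq delta m) %| (\sum_(lo <= j < m) a j * Posz (delta j))%R)%Z.
Proof.
rewrite big_nat_cond; apply: rpred_sum => j /andP[/andP[_ jm] _].
by apply: dvdz_mull; rewrite dvdzE dseq_dvd.
Qed.

Lemma delta_addMseq delta k : (1 <= k)%N ->
  (Posz (delta k) + Mseq delta k =
   \sum_(1 <= j < k) (Posz (nseq delta j * delta j) - Posz (delta j)))%R.
Proof.
elim: k => // k IH; case: (posnP k) => [-> _|k_gt0 _].
  by rewrite /Mseq !big_geq // addr0 addrN.
rewrite big_nat_recr //= -(IH k_gt0) /Mseq big_nat_recr //= /qseq /nseq mulnC.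
ring.
Qed.

Section CharacteristicSequence.

Variables (delta : nat -> nat) (h : nat).
Hypothesis delta_char : char_delta_seq delta h.

Lemma dseqS_gt0 j : (j <= h)%N -> (0 < dseq delta j.+1)%N.
Proof.
have [delta_gt0 _] := delta_char.
by move/delta_gt0 => dj_gt0; rewrite dseqS gcdn_gt0 dj_gt0 orbT.
Qed.

Lemma nseq_gt0 j : (1 <= j <= h)%N -> (0 < nseq delta j)%N.
Proof.
have [_ [_ [dseq_decr _]]] := delta_char.
move=> j_range; rewrite divn_gt0; last by apply: dseqS_gt0; case/andP: j_range.
exact/ltnW/dseq_decr.
Qed.

Lemma reduce_top_coef (c : nat -> nat) m : (1 <= m <= h)%N ->
  exists (c' : nat -> nat) (r : nat), (r < nseq delta m)%N /\
    (\sum_(0 <= j < m.+1) c j * delta j =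
     \sum_(0 <= j < m) c' j * delta j + r * delta m)%N.
Proof.
have [_ [_ [_ [n_delta_in_Gamma _]]]] := delta_char.
move=> m_range; have [e He] := n_delta_in_Gamma m m_range; case: He => He.
exists (fun j => c j + c m %/ nseq delta m * e j)%N, (c m %% nseq delta m).
split; first by rewrite ltn_pmod ?nseq_gt0.
under [in RHS]eq_bigr do rewrite mulnDl -mulnA.
rewrite big_nat_recr //= big_split /= -big_distrr /= -He.
rewrite {1}(divn_eq (c m) (nseq delta m)) /nseq.
ring.
Qed.

Lemma top_coef_unique m (r a : int) : (1 <= m <= h)%N ->
  (0 <= r < Posz (nseq delta m))%R -> (0 <= a < Posz (nseq delta m))%R ->
  (Posz (dseq delta m) %| ((r - a) * Posz (delta m))%R)%Z -> r = a.
Proof.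
move=> m_range r_range a_range; rewrite dvdzE abszM /= => dvd_d.
have dvd_n : (nseq delta m %| `|(r - a)%R|)%N.
  by rewrite /nseq dseqS dvdn_div_gcdl // -dseqS dseqS_gt0 //; case/andP: m_range.
have [/eqP | diff_gt0] := posnP `|(r - a)%R|%N; first by rewrite absz_eq0 subr_eq0 => /eqP.
have := dvdn_leq diff_gt0 dvd_n; lia.
Qed.

Lemma standard_coef0_ge0 m (c : nat -> nat) (a0 : int) (a : nat -> int) :
  (1 <= m <= h.+1)%N ->
  (forall j, (1 <= j < m)%N -> 0 <= a j < Posz (nseq delta j))%R ->
  Posz (\sum_(0 <= j < m) c j * delta j)%N =
    (a0 * Posz (delta 0) + \sum_(1 <= j < m) a j * Posz (delta j))%R ->
  (0 <= a0)%R.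
Proof.
elim: m c => // m IH c /andP[_ m_le] a_range.
have [-> | m_gt0] := posnP m.
  rewrite big_nat1 big_geq // addr0 PoszM.
  have [delta_gt0 _] := delta_char; have := delta_gt0 0%N isT; nia.
have m_range : (1 <= m <= h)%N by rewrite m_gt0.
have [c' [r [r_lt ->]]] := reduce_top_coef c m_range.
rewrite big_nat_recr //= PoszD PoszM.
set X := Posz _; set Y := (\sum_(1 <= j < m) _)%R => eq_comb.
have r_eq : Posz r = a m.
  apply: (top_coef_unique m_range); first by lia.
    by apply: a_range; rewrite m_gt0 ltnSn.
  have -> : ((Posz r - a m) * Posz (delta m) = a0 * Posz (delta 0) + Y - X)%R.
    by apply: (addrI X); rewrite mulrBl addrA eq_comb; ring.
  rewrite /X natz_comb rpredB ?rpredD ?dseq_dvdz_sum //.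
  by apply: dvdz_mull; rewrite dvdzE dseq_dvd.
apply: (IH c'); first by rewrite m_gt0 ltnW.
  by move=> j /andP[j_ge1 j_lt]; apply: a_range; rewrite j_ge1 ltnW.
by move: eq_comb; rewrite -r_eq addrA => /addIr.
Qed.

Lemma delta_addMseq_nat k : (1 <= k <= h)%N ->
  (Posz (delta k) + Mseq delta k)%R =
  Posz (\sum_(1 <= j < k) (nseq delta j - 1) * delta j)%N.
Proof.
case/andP=> k_ge1 k_le; rewrite delta_addMseq // (big_morph Posz PoszD erefl).
apply: eq_big_nat => j /andP[j_ge1 j_lt].
rewrite mulnBl mul1n subzn // leq_pmull // nseq_gt0 // j_ge1.
exact: leq_trans (ltnW j_lt) k_le.
Qed.

End CharacteristicSequence.

Theorem lemma7p1 (delta : nat -> nat) (h k : nat) :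
  (2 <= h)%N -> char_delta_seq delta h -> (2 <= k <= h)%N ->
  inGamma delta 1 k (Posz (delta k) + Mseq delta k)%R /\
  ~ inGamma delta 0 k (Posz (delta k) + Mseq delta k - Posz (delta 0%N))%R.
Proof.
move=> _ delta_char /andP[k_ge2 k_le].
have k_range : (1 <= k <= h)%N by rewrite k_le ltnW.
rewrite (delta_addMseq_nat delta_char k_range); split.
  by exists (fun j => nseq delta j - 1)%N.
case=> c c_rep; suff : (0 <= -1 :> int)%R by [].
apply: (standard_coef0_ge0 delta_char (m := k) (c := c) (a := fun j => Posz (nseq delta j - 1))).
- by rewrite ltnW // ltnW.
- move=> j /andP[j_ge1 j_lt].
  have := nseq_gt0 delta_char (j := j); rewrite j_ge1 (leq_trans (ltnW j_lt) k_le).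
  by move=> /(_ isT); lia.
- by rewrite -c_rep natz_comb mulN1r addrC.
Qed.
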